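(* Let $d\ge2$ and let $\mathcal{H}$ be a $d$-uniform simple hypergraph such that any two distinct edges $S,S'$ with $S\cap S'\neq\emptyset$ satisfy $|S\cap S'|=d-1$. Let $x$ be a simplicial vertex of $\mathcal{H}$ and $S$ an edge of $\mathcal{H}$ containing $x$. If $\mathcal{S}$ is an induced matching in $\mathcal{H}\setminus S$, then $\mathcal{S}$ is an induced matching in $\mathcal{H}$. In particular, if $\mathcal{S}$ is a self disjoint set in $\mathcal{H}\setminus S$, then $\mathcal{S}$ is a self disjoint set in $\mathcal{H}$.
   Context: A simple hypergraph $\mathcal{H}$ is a set $\mathcal{E}(\mathcal{H})$ of subsets (edges) of a finite vertex set, each of cardinality at least $2$, none contained in another; $d$-uniform means all edges have cardinality $d$. $\mathcal{H}\setminus S$ is the hypergraph with the same vertex set and edge set $\mathcal{E}(\mathcal{H})\setminus\{S\}$. For a vertex $x$, $N[x]=\{x\}\cup\{y:\{x,y\}\subseteq E\text{ for some edge }E\}$; $x$ is simplicial if every $d$-subset of $N[x]$ is an edge. A family $\mathcal{S}=\{S_1,\dots,S_i\}$ of distinct edges is an induced matching if the $S_\ell$ are pairwise disjoint and no edge outside $\mathcal{S}$ is contained in $\bigcup_\ell S_\ell$. $\mathcal{S}$ is a self disjoint set if (i) for all $k$, $S_k\nsubseteq\bigcup_{\ell\neq k}S_\ell$, and (ii) there is an induced matching $\mathcal{S}_0\subseteq\mathcal{S}$ such that for every $S_\ell\in\mathcal{S}\setminus\mathcal{S}_0$ there is $S'\in\mathcal{S}_0$ with $|S_\ell\setminus S'|=1$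 (all notions relative to the ambient hypergraph). *)

(* A hypergraph on a finite vertex type T is its edge set
   E : {set {set T}}. *)
From mathcomp Require Import all_boot.
Set Implicit Arguments. Unset Strict Implicit. Unset Printing Implicit Defensive.

Section Hyper.
Variable T : finType.
Implicit Types (E F Sf : {set {set T}}) (S : {set T}) (x : T).

Definition simple_hg E : Prop :=
  (forall S, S \in E -> 2 <= #|S|) /\
  (forall S S', S \in E -> S' \in E -> S != S' -> ~ (S \subset S')).

Definition uniform_hg (d : nat) E : Prop := forall S, S \in E -> #|S| = d.

Definition del_edge E S : {set {set T}} := E :\ S.

Definition closed_nbhd E x : {set T} :=
  x |: [set y | [exists S in E, [set x; y] \subset S]].

Definition simplicial (d : nat) E x : Prop :=
  forall A : {set T}, A \subset closed_nbhd E x -> #|A| = d -> A \in E.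

Definition union_of Sf : {set T} := \bigcup_(S in Sf) S.

Definition induced_matching E Sf : Prop :=
  Sf \subset E /\
  (forall S S', S \in Sf -> S' \in Sf -> S != S' -> [disjoint S & S']) /\
  (forall S, S \in E -> S \notin Sf -> ~ (S \subset union_of Sf)).

Definition self_disjoint E Sf : Prop :=
  Sf \subset E /\
  (forall S, S \in Sf -> ~ (S \subset \bigcup_(S' in Sf | S' != S) S')) /\
  (exists S0 : {set {set T}}, S0 \subset Sf /\ induced_matching E S0 /\
     forall S, S \in Sf :\: S0 -> exists2 S', S' \in S0 & #|S :\: S'| = 1).

End Hyper.

(* Suppose the deleted edge S were covered by an induced matching Sf of
   H \ S.  The simplicial vertex x of S lies in some S1 of Sf, and S, S1 are
   distinct edges, so some y in S misses S1.  Swapping x for y in S1 gives a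
   d-subset of N[x], hence an edge A of H \ S covered by Sf; inducedness puts
   A in Sf, yet A meets S1 in S1 - x, which is nonempty because d >= 2. *)
From mathcomp Require Import all_boot.

Set Implicit Arguments.
Unset Strict Implicit.
Unset Printing Implicit Defensive.

Section InducedMatchingDeleteEdge.
Variable T : finType.
Implicit Types (E F Sf : {set {set T}}) (S : {set T}) (x : T).

Lemma edge_sub_closed_nbhd E S x : S \in E -> x \in S -> S \subset closed_nbhd E x.
Proof.
move=> SE xS; apply/subsetP => y yS; rewrite !inE; apply/orP; right.
apply/existsP; exists S; rewrite SE; apply/subsetP => z.
by rewrite !inE => /orP[] /eqP->.
Qed.

Lemma simplicial_swap_edge d E x S S1 y :
  uniform_hg d E -> simplicial d E x -> S \in E -> S1 \in E ->
  x \in S -> x \in S1 -> y \in S -> y \notin S1 -> y |: (S1 :\ x) \in E.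
Proof.
move=> unif simpl SE S1E xS xS1 yS yS1; apply: simpl.
  apply/subsetP => z /setU1P[-> | /setD1P[_ zS1]].
    exact: subsetP (edge_sub_closed_nbhd SE xS) _ yS.
  exact: subsetP (edge_sub_closed_nbhd S1E xS1) _ zS1.
have := cardsD1 x S1; rewrite xS1 (unif _ S1E) => ->.
by rewrite cardsU1 in_setD1 (negbTE yS1) andbF.
Qed.

Lemma simplicial_edge_not_covered d E x S Sf :
  2 <= d -> simple_hg E -> uniform_hg d E -> simplicial d E x ->
  S \in E -> x \in S -> induced_matching (del_edge E S) Sf ->
  ~ S \subset union_of Sf.
Proof.
move=> d2 simp unif simpl SE xS [sub [disj ind]] SU.
have [S1 S1f xS1] := bigcupP (subsetP SU x xS).
have /setD1P[S1nS S1E] := subsetP sub S1 S1f.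
have [y yS yS1] : exists2 y, y \in S & y \notin S1.
  by apply/subsetPn/negP; apply: simp.2; rewrite // eq_sym.
pose A := y |: (S1 :\ x).
have AE : A \in E := simplicial_swap_edge unif simpl SE S1E xS xS1 yS yS1.
have AnS : A != S.
  apply: contraTneq xS1 => AS; move: xS; rewrite -AS !inE eqxx /= orbF.
  by move/eqP->.
have AU : A \subset union_of Sf.
  apply/subsetP => z /setU1P[-> | /setD1P[_ zS1]].
    exact: subsetP SU _ yS.
  by apply/bigcupP; exists S1.
have ASf : A \in Sf.
  by apply: contraPT AU; apply: ind; rewrite !inE AnS AE.
have AnS1 : A != S1 by apply: contraNneq yS1 => <-; rewrite setU11.
have [w wS1x] : exists w, w \in S1 :\ x.
  apply/set0Pn; rewrite -card_gt0.
  by move: d2; have := cardsD1 x S1; rewrite xS1 (unif _ S1E) => ->.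
have wA : w \in A by rewrite setU1r.
by have := disjointFr (disj A S1 ASf S1f AnS1) wA; rewrite (setD1P wS1x).2.
Qed.

Lemma induced_matching_del_edge E S Sf :
  induced_matching (del_edge E S) Sf -> ~ S \subset union_of Sf ->
  induced_matching E Sf.
Proof.
move=> [sub [disj ind]] notSU; split; first exact: subset_trans sub (subD1set _ _).
split=> // S' S'E S'nSf; case: (eqVneq S' S) => [-> // | S'nS].
by apply: ind; rewrite ?inE ?S'nS.
Qed.

Lemma self_disjoint_mono F E Sf :
  F \subset E -> (forall M, induced_matching F M -> induced_matching E M) ->
  self_disjoint F Sf -> self_disjoint E Sf.
Proof.
move=> FE imFE [sub [uncov [S0 [S0sub [imS0 near]]]]].
split; first exact: subset_trans sub FE.
by split=> //; exists S0; split=> //; split; first exact: imFE.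
Qed.

End InducedMatchingDeleteEdge.

Theorem lemma3p3 (T : finType) (d : nat) (E : {set {set T}}) (x : T) (S : {set T}) :
  2 <= d ->
  simple_hg E ->
  uniform_hg d E ->
  (forall S1 S2, S1 \in E -> S2 \in E -> S1 != S2 ->
     S1 :&: S2 != set0 -> #|S1 :&: S2| = d.-1) ->
  simplicial d E x ->
  S \in E -> x \in S ->
  (forall Sf : {set {set T}},
     induced_matching (del_edge E S) Sf -> induced_matching E Sf) /\
  (forall Sf : {set {set T}},
     self_disjoint (del_edge E S) Sf -> self_disjoint E Sf).
Proof.
move=> d2 simp unif _ simpl SE xS.
have imE Sf : induced_matching (del_edge E S) Sf -> induced_matching E Sf.
  move=> imSf; apply: (induced_matching_del_edge imSf).
  exact: simplicial_edge_not_covered d2 simp unif simpl SE xS imSf.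
split=> // Sf; apply: self_disjoint_mono imE.
exact: subD1set.
Qed.
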